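(* Let $K$ be a number field, let $\alpha>1$ be real, and let $F\in K[[x^{\mathbb{R}}]]$ be a Hahn series satisfying $\sum_{i=0}^d P_i(x)F(x^{\alpha^i})=0$ for some polynomials $P_0,\dots,P_d\in K[x]$ with $P_d\ne0$. Then only finitely many of the sets $T(s)=\alpha^{\mathbb{Z}}s+\mathbb{Z}[\alpha,\alpha^{-1}]$ ($s\in\mathbb{R}$) have nonempty intersection with $P(F)$; in other words, the set $\widehat{P(F)}$ of equivalence classes of the relation $\sim$ meeting $P(F)$ is finite.
   Context: $K[[x^{\mathbb{R}}]]$ is the field of Hahn series $\sum_{i\in\mathbb{R}} f_ix^i$ ($f_i\in K$) with well-ordered support $P(F)=\{i:f_i\ne0\}$; $F(x^\gamma)=\sum_if_ix^{\gamma i}$. $\mathbb{Z}[\alpha,\alpha^{-1}]$ is the subring of $\mathbb{R}$ generated by $\alpha^{\pm1}$. The relation $x\sim y$ on $\mathbb{R}$ holds iff $\alpha^mx+r=y$ for some $m\in\mathbb{Z}$, $r\in\mathbb{Z}[\alpha,\alpha^{-1}]$; its equivalence classes are exactly the sets $T(s)=\{\alpha^ms+r:m\in\mathbb{Z}, r\in\mathbb{Z}[\alpha,\alpha^{-1}]\}$. *)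

From HB Require Import structures.
From mathcomp Require Import all_boot all_order all_algebra all_field.
From mathcomp Require Import all_classical all_reals.
Set Implicit Arguments. Unset Strict Implicit. Unset Printing Implicit Defensive.
Import Order.TTheory GRing.Theory Num.Theory.
Local Open Scope ring_scope.
Local Open Scope classical_set_scope.

(* Support P(F) of a (candidate) Hahn series F : R -> K, F j = coefficient of x^j. *)
Definition supp (R : realType) (K : fieldType) (F : R -> K) : set R :=
  [set j | F j != 0].

Definition is_hahn (R : realType) (K : fieldType) (F : R -> K) : Prop :=
  forall S : set R, S `<=` supp F -> S !=set0 ->
    exists2 m, S m & forall y, S y -> m <= y.

Inductive Zgen (R : realType) (a : R) : R -> Prop :=
| Zgen1 : Zgen a 1
| Zgena : Zgen a a
| ZgenV : Zgen a a^-1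
| ZgenB x y : Zgen a x -> Zgen a y -> Zgen a (x - y)
| ZgenM x y : Zgen a x -> Zgen a y -> Zgen a (x * y).

Definition Tclass (R : realType) (a s : R) : set R :=
  [set y | exists m : int, exists2 r, Zgen a r & y = a ^ m * s + r].

(* Coefficient of x^e in  sum_{i=0}^d P_i(x) F(x^{a^i}), where
   F(x^g) = sum_j F_j x^{g j}: the coefficient of x^e in P(x) F(x^g) is
   sum_k P`_k F_{(e-k)/g}. *)
Definition func_eq_coef (R : realType) (K : fieldType) (a : R) (d : nat)
  (P : nat -> {poly K}) (F : R -> K) (e : R) : K :=
  \sum_(i < d.+1) \sum_(k < size (P i)) (P i)`_k * F ((e - k%:R) / a ^+ i).

From HB Require Import structures.
From mathcomp Require Import all_boot all_order all_algebra all_field.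
From mathcomp Require Import all_classical all_reals.
From mathcomp Require Import ring.
Set Implicit Arguments.
Unset Strict Implicit.
Unset Printing Implicit Defensive.

Import Order.TTheory GRing.Theory Num.Theory.
Local Open Scope ring_scope.
Local Open Scope classical_set_scope.

(* Let v be the least element of a class T meeting P(F).  The monomial x^k
   of P_i meets the term x^v of F(x^(a^i)) at the exponent k + a^i v; let mu
   be the least such exponent over the nonzero coefficients of the P_i.  Every
   term of the equation contributing to x^mu evaluates F at (mu - k) / a^i,
   a point of T that is at most v, so F vanishes there unless that point is v
   itself.  As the coefficient of x^mu vanishes, two of the exponents
   k + a^i v must coincide, which forces v to be one of the finitely many
   numbers (k' - k) / (a^i - a^i'). *)

Lemma lt_size_coef (K : nzRingType) (p : {poly K}) k : p`_k != 0 -> (k < size p)%N.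
Proof. by apply: contraR; rewrite -leqNgt => /(nth_default 0) ->. Qed.

Section ZgenClosure.
Variables (R : realType) (a : R).

Lemma Zgen0 : Zgen a 0.
Proof. by rewrite -(subrr 1); apply: ZgenB; apply: Zgen1. Qed.

Lemma ZgenN x : Zgen a x -> Zgen a (- x).
Proof. by move=> Zx; rewrite -sub0r; apply: ZgenB => //; apply: Zgen0. Qed.

Lemma ZgenD x y : Zgen a x -> Zgen a y -> Zgen a (x + y).
Proof. by move=> Zx Zy; rewrite -(opprK y); apply: ZgenB => //; apply: ZgenN. Qed.

Lemma Zgen_natr n : Zgen a n%:R.
Proof.
elim: n => [|n IHn]; first exact: Zgen0.
by rewrite mulrSr; apply: ZgenD => //; apply: Zgen1.
Qed.

Lemma Zgen_exprn x n : Zgen a x -> Zgen a (x ^+ n).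
Proof.
move=> Zx; elim: n => [|n IHn]; first by rewrite expr0; apply: Zgen1.
by rewrite exprS; apply: ZgenM.
Qed.

Lemma Zgen_exprz (m : int) : Zgen a (a ^ m).
Proof.
case: m => n; first by apply: Zgen_exprn; apply: Zgena.
by rewrite NegzE -exprz_inv; apply: Zgen_exprn; apply: ZgenV.
Qed.

Hypothesis a_neq0 : a != 0.

Lemma Tclass_eq s v : Tclass a s v -> Tclass a v = Tclass a s.
Proof.
have aU : a \is a GRing.unit by rewrite unitfE.
move=> [m [r Zr ->]]; apply/seteqP; split=> y [m' [r' Zr' ->]].
  exists (m' + m), (a ^ m' * r + r').
    by apply: ZgenD => //; apply: ZgenM => //; apply: Zgen_exprz.
  by rewrite exprzDr // mulrDr mulrA addrA.
exists (m' - m), (r' - a ^ (m' - m) * r).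
  by apply: ZgenB => //; apply: ZgenM => //; apply: Zgen_exprz.
by rewrite mulrDr mulrA -exprzDr // subrK; ring.
Qed.

Lemma Tclass_affine v r (i j : nat) :
  Zgen a r -> Tclass a v ((a ^+ j * v + r) / a ^+ i).
Proof.
have aU : a \is a GRing.unit by rewrite unitfE.
move=> Zr; exists (j%:Z - i%:Z), (r / a ^+ i).
  have -> : (a ^+ i)^-1 = a ^ (- i%:Z) by rewrite -invr_expz.
  by apply: ZgenM => //; apply: Zgen_exprz.
rewrite exprzDr // -invr_expz.
have ai_neq0 : a ^+ i != 0 by rewrite expf_neq0.
by rewrite mulrDl mulrAC.
Qed.

End ZgenClosure.

(* For p = (i, k): the exponent of x^k * x^(a^i v). *)
Definition term_exponent (R : realType) (a v : R) (p : nat * nat) : R :=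
  p.2%:R + a ^+ p.1 * v.

Definition coincidence (R : realType) (a : R) (p q : nat * nat) : R :=
  (q.2%:R - p.2%:R) / (a ^+ p.1 - a ^+ q.1).

Lemma term_exponent_coincidence (R : realType) (a v : R) p q : 1 < a -> p != q ->
  term_exponent a v p = term_exponent a v q -> v = coincidence a p q.
Proof.
move: p q => [i k] [i' k'] a_gt1 pq; rewrite /term_exponent /coincidence /=.
have [ii'|ii'] := eqVneq i i'.
  rewrite ii' => /addIr /eqP; rewrite eqr_nat => /eqP kk'.
  by rewrite ii' kk' eqxx in pq.
have a_gt0 : 0 < a by apply: lt_trans a_gt1.
have da_neq0 : a ^+ i - a ^+ i' != 0.
  by rewrite subr_eq0 (inj_eq (ieexprIn a_gt0 (negbT (gt_eqF a_gt1)))).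
move=> e; apply: (mulIf da_neq0).
by rewrite mulfVK // -[k'%:R](addrK (a ^+ i' * v)) -e; ring.
Qed.

Section FunctionalEquation.
Variables (R : realType) (K : fieldType) (a : R) (d : nat) (P : nat -> {poly K}).
Variable F : R -> K.

Lemma func_eq_coef_single e i0 k0 : (i0 < d.+1)%N -> (k0 < size (P i0))%N ->
  (forall i k, (i < d.+1)%N -> (i, k) != (i0, k0) ->
     (P i)`_k * F ((e - k%:R) / a ^+ i) = 0) ->
  func_eq_coef a d P F e = (P i0)`_k0 * F ((e - k0%:R) / a ^+ i0).
Proof.
move=> i0_le k0_lt vanish; rewrite /func_eq_coef (bigD1 (Ordinal i0_le)) //=.
rewrite [X in _ + X]big1 ?addr0 => [|i /negPf ii0]; last first.
  apply: big1 => k _; apply: vanish => //.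
  by rewrite xpair_eqE -[i0]/(val (Ordinal i0_le)) (inj_eq val_inj) ii0.
rewrite (bigD1 (Ordinal k0_lt)) //= [X in _ + X]big1 ?addr0 // => k /negPf kk0.
apply: vanish => //.
by rewrite xpair_eqE eqxx -[k0]/(val (Ordinal k0_lt)) (inj_eq val_inj) kk0.
Qed.

Let N := (\max_(i < d.+1) size (P i))%N.
Let idx (p : 'I_d.+1 * 'I_N) : nat * nat := (p.1 : nat, p.2 : nat).

Definition critical_values : set R :=
  [set coincidence a (idx pq.1) (idx pq.2)
  | pq in [set: ('I_d.+1 * 'I_N)%type * ('I_d.+1 * 'I_N)]].

Lemma finite_critical_values : finite_set critical_values.
Proof. exact: finite_image finite_finset. Qed.

Lemma coef_neq0_ltN i k : (i < d.+1)%N -> (P i)`_k != 0 -> (k < N)%N.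
Proof.
move=> i_le /lt_size_coef /leq_trans; apply.
exact: (leq_bigmax (F := fun j : 'I_d.+1 => size (P j)) (Ordinal i_le)).
Qed.

Lemma coincidence_critical i k i' k' :
  (i < d.+1)%N -> (i' < d.+1)%N -> (P i)`_k != 0 -> (P i')`_k' != 0 ->
  critical_values (coincidence a (i, k) (i', k')).
Proof.
move=> i_le i'_le c c'.
by exists ((Ordinal i_le, Ordinal (coef_neq0_ltN i_le c)),
           (Ordinal i'_le, Ordinal (coef_neq0_ltN i'_le c'))).
Qed.

Hypotheses (a_gt1 : 1 < a) (Pd_neq0 : P d != 0).
Hypothesis func_eq : forall e, func_eq_coef a d P F e = 0.

Lemma min_supp_critical v : supp F v ->
  (forall y, Tclass a v y -> supp F y -> v <= y) -> critical_values v.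
Proof.
move=> Fv v_min; apply: contrapT => v_ncrit.
have a_gt0 : 0 < a by apply: lt_trans a_gt1.
have ai_gt0 i : 0 < a ^+ i by rewrite exprn_gt0.
have lead_neq0 : (P d)`_(size (P d)).-1 != 0 by rewrite -lead_coefE lead_coef_eq0.
pose lead_idx : 'I_d.+1 * 'I_N := (ord_max, Ordinal (coef_neq0_ltN (ltnSn d) lead_neq0)).
have [[i0 k0] /= c0 exp_min] := @arg_minP _ _ _ lead_idx
  (fun p => (P p.1)`_p.2 != 0) (fun p => term_exponent a v (idx p)) lead_neq0.
pose mu := term_exponent a v (i0 : nat, k0 : nat).
have vanish i k : (i < d.+1)%N -> (i, k) != (i0 : nat, k0 : nat) ->
    (P i)`_k * F ((mu - k%:R) / a ^+ i) = 0.
  move=> i_le ik_ne; have [->|c_neq0] := eqVneq (P i)`_k 0; first by rewrite mul0r.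
  have t_le : (mu - k%:R) / a ^+ i <= v.
    rewrite ler_pdivrMr // lerBlDl mulrC.
    exact: (exp_min (Ordinal i_le, Ordinal (coef_neq0_ltN i_le c_neq0))).
  have t_neq : (mu - k%:R) / a ^+ i != v.
    apply: contra_notN v_ncrit => /eqP t_v.
    suff -> : v = coincidence a (i, k) (i0 : nat, k0 : nat).
      exact: coincidence_critical i_le (ltn_ord i0) c_neq0 c0.
    apply: term_exponent_coincidence => //.
    by rewrite -/mu -t_v /term_exponent /= mulrC divfK ?gt_eqF // addrC subrK.
  have t_class : Tclass a v ((mu - k%:R) / a ^+ i).
    have -> : mu - k%:R = a ^+ i0 * v + (k0%:R - k%:R).
      by rewrite /mu /term_exponent /=; ring.
    by apply: Tclass_affine; [rewrite gt_eqF | apply: ZgenB; apply: Zgen_natr].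
  have : ~ supp F ((mu - k%:R) / a ^+ i).
    by move=> /(v_min _ t_class); rewrite leNgt lt_neqAle t_neq t_le.
  by rewrite /supp /= => /negP; rewrite negbK => /eqP ->; rewrite mulr0.
have := func_eq mu.
rewrite (func_eq_coef_single (ltn_ord i0) (lt_size_coef c0) vanish).
have -> : (mu - k0%:R) / a ^+ i0 = v.
  by rewrite /mu /term_exponent /= addrC addKr mulrC mulKf ?gt_eqF.
by move/eqP; rewrite mulf_eq0 (negbTE c0) (negbTE Fv).
Qed.

End FunctionalEquation.

Theorem mainTheorem8 (R : realType) (K : fieldExtType rat) (a : R)
  (d : nat) (P : nat -> {poly K}) (F : R -> K) :
  1 < a -> is_hahn F -> P d != 0 ->
  (forall e : R, func_eq_coef a d P F e = 0) ->
  finite_set [set Tclass a s | s in [set s | Tclass a s `&` supp F !=set0]].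
Proof.
move=> a_gt1 hahnF Pd_neq0 func_eq.
have a_neq0 : a != 0 by rewrite gt_eqF // (lt_trans ltr01).
apply: sub_finite_set (finite_image (Tclass a) (finite_critical_values a d P)).
move=> _ [s [y [Ty Fy]] <-].
have [v [Tv Fv] v_min] := hahnF _ (@subIsetr _ _ _) (ex_intro _ y (conj Ty Fy)).
have Tv_eq := Tclass_eq a_neq0 Tv.
exists v; last exact: Tv_eq.
apply: (min_supp_critical a_gt1 Pd_neq0 func_eq Fv) => z.
rewrite Tv_eq => Tz Fz; exact: v_min.
Qed.
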